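(* For $n\ge 0$ and $q\ge1$, let $\psi:\mathcal{B}_n\to\mathcal{B}_{n+q+1}$ be defined by $\psi(v01^k)=v001^{k+q}$ for any binary word $v$ and $k\ge0$, and $\psi(1^n)=1^{n+q+1}$. Then $\psi(\mathcal{W}^q_n)$ is exactly the set of $q$-decreasing words of length $n+q+1$ ending with at least $q$ letters $1$.
   Context: $\mathcal{B}_n$ is the set of binary words of length $n$. For $q\ge1$, a binary word is $q$-decreasing if for every maximal run of $0$s, of length $a>0$, together with the (possibly empty) maximal run of $1$s immediately following it, of length $b$, one has $q\cdot a>b$; $\mathcal{W}^q_n$ is the set of $q$-decreasing words of length $n$. *)

(* Binary words are [seq bool] with [false] = letter 0, [true] = letter 1. *)
From mathcomp Require Import all_boot.
Set Implicit Arguments. Unset Strict Implicit. Unset Printing Implicit Defensive.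

Definition binword (n : nat) (w : seq bool) : Prop := size w = n.

(* q-decreasing: for every maximal run of 0s (length a > 0) in w, followed by the
   (possibly empty) maximal run of 1s of length b immediately after it, q * a > b.
   A maximal 0-run followed by its 1-run is a factorization
     w = u ++ 0^a ++ 1^b ++ t
   with a > 0, u empty or ending with 1, t empty or starting with 0,
   and (b = 0 -> t = [::]) (otherwise the 0-run would not be maximal). *)
Definition qdecreasing (q : nat) (w : seq bool) : Prop :=
  forall (u t : seq bool) (a b : nat),
    w = u ++ nseq a false ++ nseq b true ++ t ->
    0 < a ->
    last true u = true ->
    (t = [::] \/ head true t = false) ->
    (b = 0 -> t = [::]) ->
    b < q * a.

Definition trailing_ones (w : seq bool) : nat := find (fun x => ~~ x) (rev w).

(* psi(v 0 1^k) = v 0 0 1^(k+q),  psi(1^n) = 1^(n+q+1) *)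
Definition psi (q : nat) (w : seq bool) : seq bool :=
  let k := trailing_ones w in
  if k == size w then nseq (size w + q + 1) true
  else take (size w - k - 1) w ++ [:: false; false] ++ nseq (k + q) true.

Lemma psi_ones q n : psi q (nseq n true) = nseq (n + q + 1) true.
Proof.
rewrite /psi /trailing_ones size_nseq.
have -> : find (fun x => ~~ x) (rev (nseq n true)) = n.
  by rewrite rev_nseq; elim: n => //= n ->.
by rewrite eqxx.
Qed.

Lemma psi_last0 q v k :
  psi q (v ++ false :: nseq k true) = v ++ [:: false; false] ++ nseq (k + q) true.
Proof.
have Hf : forall m, find (fun x : bool => ~~ x) (nseq m true ++ [:: false] ++ rev v) = m.
  by elim=> //= m ->.
rewrite /psi /trailing_ones rev_cat rev_cons rev_nseq -cats1 -catA Hf.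
rewrite size_cat /= size_nseq.
have -> : (k == size v + k.+1) = false.
  by apply/negbTE; rewrite neq_ltn addnS ltnS leq_addl.
have -> : size v + k.+1 - k - 1 = size v by rewrite addnS -addSn addnK subn1.
by rewrite take_size_cat.
Qed.

(* Every binary word is either 1^b or v 0^a 1^b with a > 0 and v empty or ending
   with 1, and the last block 0^a 1^b is then the only maximal block that does not
   lie inside v.  Hence v 0^a 1^b is q-decreasing iff v is and b < q a.  Since psi
   maps v 0^a 1^b to v 0^(a+1) 1^(b+q), and b < q a iff b + q < q (a + 1), psi
   preserves q-decreasingness; conversely a q-decreasing v 0^a 1^b with b >= q has
   a >= 2 and is the image of v 0^(a-1) 1^(b-q).  The argument never uses q >= 1. *)
From mathcomp Require Import all_boot.
From mathcomp Require Import zify.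

Set Implicit Arguments.
Unset Strict Implicit.

Lemma eq_cat_split (T : Type) (x y z w : seq T) :
  x ++ y = z ++ w -> size x <= size z -> exists2 m, z = x ++ m & y = m ++ w.
Proof.
move=> e le_xz; exists (drop (size x) z).
  by rewrite -[LHS](cat_take_drop (size x)) -(takel_cat w le_xz) -e take_size_cat.
rewrite -(drop_size_cat y (erefl (size x))) e drop_cat; case: ltnP => // ge_xz.
have /eqP eq_xz : size x == size z by rewrite eqn_leq le_xz ge_xz.
by rewrite eq_xz subnn drop0 drop_size.
Qed.

Lemma nseqS_cat (T : Type) (a : nat) (x : T) s : nseq a.+1 x ++ s = nseq a x ++ x :: s.
Proof. by elim: a => //= a ->. Qed.

Lemma last_nseqS (T : Type) (z x : T) a : last z (nseq a.+1 x) = x.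
Proof. by elim: a => //= a ->. Qed.

Lemma nseq_false_true_descent a b x y :
  nseq a false ++ nseq b true <> x ++ true :: false :: y.
Proof.
elim: a x => [|a IH] x /=.
  move=> e; have : false \in nseq b true by rewrite e mem_cat !inE orbT.
  by rewrite mem_nseq andbF.
by case: x => [|c x] //= [_ /IH].
Qed.

Lemma nseq_false_true_inj a b a' b' :
  nseq a false ++ nseq b true = nseq a' false ++ nseq b' true -> a = a' /\ b = b'.
Proof.
move=> e; have := congr1 (count negb) e; have := congr1 (count id) e.
by rewrite !count_cat !count_nseq /=; lia.
Qed.

Variant last_block_spec : seq bool -> Prop :=
  | AllOnes b : last_block_spec (nseq b true)
  | LastBlock v a b of last true v : last_block_spec (v ++ nseq a.+1 false ++ nseq b true).

Lemma last_blockP w : last_block_spec w.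
Proof.
elim/last_ind: w => [|s [] IH]; first exact: (@AllOnes 0).
- case: IH => [b|v a b lv]; rewrite -cats1 -?catA -(nseqD b 1) addn1.
    exact: AllOnes.
  exact: LastBlock.
- case: IH => [b|v a [|b] lv]; rewrite -cats1.
  + by apply: (@LastBlock _ 0 0); case: b => // b; rewrite last_nseqS.
  + rewrite !cats0 -catA -(nseqD a.+1 1) addn1 -[nseq _ _]cats0.
    exact: (@LastBlock v a.+1 0).
  + by apply: (@LastBlock (v ++ _) 0 0); rewrite !last_cat !last_nseqS.
Qed.

Lemma last_block_inj u v a b a' b' :
  last true u -> last true v ->
  u ++ nseq a.+1 false ++ nseq b true = v ++ nseq a'.+1 false ++ nseq b' true ->
  [/\ u = v, a = a' & b = b'].
Proof.
wlog le_uv : u v a b a' b' / size u <= size v.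
  move=> wlog lu lv e; have [le|/ltnW le] := leqP (size u) (size v); first exact: wlog.
  by have [-> -> ->] := wlog _ _ _ _ _ _ le lv lu (esym e).
move=> _ lv e; have [m def_v em] := eq_cat_split e le_uv.
case/lastP: m def_v em => [|m c] def_v em.
  by rewrite cats0 in def_v; case: (nseq_false_true_inj em) => [[->] ->].
have {lv}c1 : c by move: lv; rewrite def_v last_cat last_rcons.
by move: em; rewrite -cats1 c1 -catA => /(@nseq_false_true_descent _ _ m).
Qed.

Lemma descent_in_prefix v a b x y :
  v ++ nseq a false ++ nseq b true = x ++ true :: false :: y ->
  exists2 z, v = rcons x true ++ z & false :: y = z ++ nseq a false ++ nseq b true.
Proof.
move=> e; have [le|] := leqP (size (rcons x true)) (size v).
  apply: eq_cat_split le; by rewrite e -cats1 -catA.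
rewrite size_rcons ltnS => le; have [m _ em] := eq_cat_split e le.
by case: (nseq_false_true_descent em).
Qed.

Lemma qdecreasing_nseq_true q b : qdecreasing q (nseq b true).
Proof.
move=> u t [//|a] c e _ _ _ _.
have : false \in nseq b true by rewrite e mem_cat /= inE eqxx orbT.
by rewrite mem_nseq andbF.
Qed.

Lemma qdecreasing_last_block q v a b : last true v ->
  qdecreasing q (v ++ nseq a.+1 false ++ nseq b true) <->
  qdecreasing q v /\ b < q * a.+1.
Proof.
move=> lv; split=> [qd | [qdv lt_b]].
  split; last by apply: (qd v [::] a.+1 b) => //; [rewrite cats0 | left].
  move=> u t [//|a'] b' e _ lu ht hb.
  apply: (qd u (t ++ nseq a.+1 false ++ nseq b true) a'.+1 b') => //.
  - by rewrite e -!catA.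
  - by right; case: ht => [->|]; [| case: t {e hb}].
  - by move=> b0; move: lv; rewrite e (hb b0) b0 cats0 /= cats0 last_cat last_nseqS.
move=> u t [//|a'] b' e _ lu [t0 | ht] hb.
  by rewrite t0 cats0 in e; case: (last_block_inj lv lu e) => _ <- <-.
case: t ht hb e => [|[] t] //= _ hb e.
case: b' hb e => [/(_ erefl) //|b'] _ e.
have e' : v ++ nseq a.+1 false ++ nseq b true =
          (u ++ nseq a'.+1 false ++ nseq b' true) ++ true :: false :: t.
  by rewrite e nseqS_cat -!catA.
have [z def_v tz] := descent_in_prefix e'.
apply: (qdv u z a'.+1 b'.+1) => //.
- by rewrite def_v -cats1 -!catA (nseqS_cat b').
- by case: z {def_v} tz => [|c z] /= []; [left | move=> <-; right].
Qed.

Lemma psi_last_block q v a b :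
  psi q (v ++ nseq a.+1 false ++ nseq b true) = v ++ nseq a.+2 false ++ nseq (b + q) true.
Proof. by rewrite nseqS_cat catA psi_last0 -catA /= -!nseqS_cat. Qed.

Lemma ones_suffix_last_block v a b u q :
  v ++ nseq a.+1 false ++ nseq b true = u ++ nseq q true -> q <= b.
Proof.
rewrite leqNgt => e; apply/negP => lt_bq.
have := congr1 (fun s => nth true (rev s) b) e.
by rewrite !rev_cat !rev_nseq -catA !nth_cat !size_nseq ltnn subnn !nth_nseq lt_bq.
Qed.

Theorem proposition2 (n q : nat) (hq : 1 <= q) (w' : seq bool) :
  (exists w : seq bool, binword n w /\ qdecreasing q w /\ psi q w = w') <->
  (binword (n + q + 1) w' /\ qdecreasing q w' /\
   exists u : seq bool, w' = u ++ nseq q true).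
Proof.
rewrite /binword; split.
  case=> w [<- [qdw <-]]; case: w / last_blockP qdw => [b | v a b lv] qdw.
    rewrite psi_ones !size_nseq; split=> //; split; first exact: qdecreasing_nseq_true.
    by exists (nseq (b + 1) true); rewrite -nseqD addnAC.
  rewrite psi_last_block; case/(qdecreasing_last_block _ _ _ lv): qdw => qdv lt_b.
  split; first by rewrite !size_cat !size_nseq; lia.
  split; first by apply/qdecreasing_last_block; rewrite // mulnS addnC ltn_add2l.
  by exists (v ++ nseq a.+2 false ++ nseq b true); rewrite nseqD !catA.
case=> size_w' [qdw' [u def_w']].
case: w' / last_blockP size_w' qdw' def_w' => [b | v a b lv] size_w' qdw' def_w'.
  exists (nseq n true); rewrite size_nseq in size_w'.
  rewrite size_nseq psi_ones size_w'; do 2!split=> //; exact: qdecreasing_nseq_true.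
have le_qb := ones_suffix_last_block def_w'.
case/(qdecreasing_last_block _ _ _ lv): qdw' => qdv lt_b.
case: a lt_b size_w' {def_w'} => [|a] lt_b size_w'.
  by rewrite muln1 ltnNge le_qb in lt_b.
exists (v ++ nseq a.+1 false ++ nseq (b - q) true); split; last split.
- by move: size_w'; rewrite !size_cat !size_nseq; lia.
- by apply/qdecreasing_last_block => //; split=> //; rewrite mulnS in lt_b; lia.
- by rewrite psi_last_block subnK.
Qed.
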